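(* Let $P$ be a continuous poset. Then (i) $\overline{k[U]}\cong k[\mathrm{Int}\,U]$ for every up-set $U\subseteq P$, where $\mathrm{Int}$ is the interior in the Scott topology; (ii) $\overline{k[D]}\cong k[\mathrm{cl}\,D]$ for every down-set $D\subseteq P$, where $\mathrm{cl}$ is the closure in the Scott topology. For $P=\mathbb R^n$ with the componentwise order one also has (iii) $\underline{k[U]}\cong k[\mathrm{cl}^s U]$ for every up-set $U\subseteq\mathbb R^n$ and (iv) $\underline{k[D]}\cong k[\mathrm{Int}^s D]$ for every down-set $D\subseteq\mathbb R^n$, where $\mathrm{cl}^s$, $\mathrm{Int}^s$ denote closure and interior in the standard Euclidean topology.
   Context: Let $P$ be a poset (as a category, $p\to q$ iff $p\le q$). A subset is directed if nonempty and any two elements have an upper bound in it. $x\ll y$ means: for every directed $D$ whose supremum exists with $y\le\sup D$, some $d\in D$ satisfies $x\le d$. $P$ is continuous if for each $p$ the set $\{x:x\ll p\}$ is directed with supremum $p$ ($\mathbb R^n$ with componentwise order is continuous, with $x\ll y$ iff $x_i<y_i$ for all $i$). A set $U$ is Scott-open if it is an up-set meeting every directed set whose supremum exists and lies in $U$. $k$ is a commutative ring with unity; persistence modules are functors from $P$ to $k$-modules. For a convex $I\subseteq P$ (i.e. $x,z\in I$, $x\le y\le z$ imply $y\in I$), the indicator module $k[I]$ has $k[I]_p=k$ for $p\in I$ and $0$ otherwise, with identity internal maps between points of $I$ and zero otherwise. $\underline M_p=\varprojlim_{x\gg p}M_x$, $\overline M_p=\varinjlim_{x\ll p}M_x$.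 *)

From HB Require Import structures.
From mathcomp Require Import all_boot all_order all_algebra.
From mathcomp Require Import all_classical all_reals all_analysis.
Set Implicit Arguments. Unset Strict Implicit. Unset Printing Implicit Defensive.
Import Order.TTheory GRing.Theory Num.Theory.
Import numFieldNormedType.Exports.
Local Open Scope classical_set_scope.
Local Open Scope ring_scope.

Section PosetNotions.
Variables (P : Type) (le : P -> P -> Prop).

Definition is_poset : Prop :=
  (forall x, le x x) /\ (forall x y z, le x y -> le y z -> le x z) /\
  (forall x y, le x y -> le y x -> x = y).

Definition directed (D : set P) : Prop :=
  (exists d, D d) /\
  (forall x y, D x -> D y -> exists z, D z /\ le x z /\ le y z).

Definition is_sup (D : set P) (s : P) : Prop :=
  (forall d, D d -> le d s) /\ (forall u, (forall d, D d -> le d u) -> le s u).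

Definition way_below (x y : P) : Prop :=
  forall (D : set P) (s : P), directed D -> is_sup D s -> le y s ->
    exists d, D d /\ le x d.

Definition continuous_poset : Prop :=
  forall p, directed (fun x => way_below x p) /\ is_sup (fun x => way_below x p) p.

Definition up_set (U : set P) : Prop := forall x y, U x -> le x y -> U y.
Definition down_set (D : set P) : Prop := forall x y, D y -> le x y -> D x.

Definition scott_open (U : set P) : Prop :=
  up_set U /\
  forall (D : set P) (s : P), directed D -> is_sup D s -> U s -> exists d, D d /\ U d.

Definition scott_int (A : set P) : set P :=
  fun p => exists V, scott_open V /\ (forall x, V x -> A x) /\ V p.

Definition scott_cl (A : set P) : set P := ~` scott_int (~` A).

Section Modules.
Variable k : comPzRingType.

(* A persistence module: a k-module at each point and structure maps
   M(p -> q), only meaningful (and only used) when le p q. *)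
Record pmod := PMod {
  pobj : P -> lmodType k;
  pmap : forall p q : P, {linear pobj p -> pobj q} }.

Definition is_pmod (M : pmod) : Prop :=
  (forall p v, pmap M p p v = v) /\
  (forall p q r v, le p q -> le q r ->
     pmap M p r v = pmap M q r (pmap M p q v)).

(* Indicator module k[I]: k (as 'rV[k]_1) on I, 0 (as 'rV[k]_0) off I;
   the structure map is right multiplication by the all-ones matrix, which is
   the identity 'rV_1 -> 'rV_1 and zero whenever source or target is 0. *)
Definition ind_dim (I : set P) (p : P) : nat := if `[< I p >] then 1%N else 0%N.

Definition ind_obj (I : set P) (p : P) : lmodType k := 'rV[k]_(ind_dim I p).

Definition ind_map (I : set P) (p q : P) : {linear ind_obj I p -> ind_obj I q} :=
  mulmxr (const_mx 1 : 'M[k]_(ind_dim I p, ind_dim I q)).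

Definition indicator (I : set P) : pmod := PMod (@ind_map I).

Definition pmod_iso (M N : pmod) : Prop :=
  exists phi : forall p, {linear pobj M p -> pobj N p},
    (forall p, bijective (phi p)) /\
    (forall p q v, le p q -> phi q (pmap M p q v) = pmap N p q (phi p v)).

Definition is_colimit (M : pmod) (S : set P) (Z : lmodType k)
    (iota : forall x, {linear pobj M x -> Z}) : Prop :=
  (forall x y v, S x -> S y -> le x y -> iota y (pmap M x y v) = iota x v) /\
  (forall (W : lmodType k) (f : forall x, {linear pobj M x -> W}),
     (forall x y v, S x -> S y -> le x y -> f y (pmap M x y v) = f x v) ->
     exists g : {linear Z -> W},
       (forall x v, S x -> g (iota x v) = f x v) /\
       (forall g' : {linear Z -> W}, (forall x v, S x -> g' (iota x v) = f x v) ->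
          forall z, g' z = g z)).

Definition is_limit (M : pmod) (S : set P) (Z : lmodType k)
    (pi : forall x, {linear Z -> pobj M x}) : Prop :=
  (forall x y z, S x -> S y -> le x y -> pmap M x y (pi x z) = pi y z) /\
  (forall (W : lmodType k) (f : forall x, {linear W -> pobj M x}),
     (forall x y w, S x -> S y -> le x y -> pmap M x y (f x w) = f y w) ->
     exists g : {linear W -> Z},
       (forall x w, S x -> pi x (g w) = f x w) /\
       (forall g' : {linear W -> Z}, (forall x w, S x -> pi x (g' w) = f x w) ->
          forall w, g' w = g w)).

(* N = \overline M : N_p = colim_{x << p} M_x, with the induced structure maps *)
Definition is_upper_bar (M N : pmod)
    (iota : forall p x, {linear pobj M x -> pobj N p}) : Prop :=
  (forall p, @is_colimit M (fun x => way_below x p) _ (iota p)) /\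
  (forall p q x v, le p q -> way_below x p ->
     pmap N p q (iota p x v) = iota q x v).

(* N = \underline M : N_p = lim_{x >> p} M_x, with the induced structure maps *)
Definition is_lower_bar (M N : pmod)
    (pi : forall p x, {linear pobj N p -> pobj M x}) : Prop :=
  (forall p, @is_limit M (fun x => way_below p x) _ (pi p)) /\
  (forall p q x v, le p q -> way_below q x ->
     pi q x (pmap N p q v) = pi p x v).

(* "\overline M is isomorphic to N": the colimit module exists, and any
   realisation of it is isomorphic to N. *)
Definition upper_bar_iso (M N : pmod) : Prop :=
  (exists B iota, @is_upper_bar M B iota) /\
  (forall B iota, @is_upper_bar M B iota -> pmod_iso B N).

Definition lower_bar_iso (M N : pmod) : Prop :=
  (exists B pi, @is_lower_bar M B pi) /\
  (forall B pi, @is_lower_bar M B pi -> pmod_iso B N).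

End Modules.
End PosetNotions.

Definition rn_le (R : realType) (n : nat) (x y : 'rV[R]_n) : Prop :=
  forall i, x ord0 i <= y ord0 i.

(* Both bars of an indicator module k[S] are again indicator modules: over a
   directed index set (or a codirected one, for limits) the colimit of k[S] is k
   once the index set enters S and stays in it, and 0 when it keeps leaving S.
   So everything reduces to describing the relevant sets through the way-below
   relation. In a continuous poset, interpolation makes every set {y | x << y}
   Scott open, whence Int U = {p | exists x << p, x in U} for an up-set U and
   cl D = {p | forall x << p, x in D} for a down-set D. In R^n, where x << y means
   x < y in every coordinate, the boxes {y | y <= x} with x >> p form a
   neighbourhood basis at p, whence cl U = {p | forall x >> p, x in U} and
   Int D = {p | exists x >> p, x in D}. *)

From Pilot Require Import Defs.
From HB Require Import structures.
From mathcomp Require Import all_boot all_order all_algebra.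
From mathcomp Require Import all_classical all_reals all_analysis.
From mathcomp Require Import lra.
Import Order.TTheory GRing.Theory Num.Theory.
Import numFieldNormedType.Exports.
Local Open Scope classical_set_scope.
Local Open Scope ring_scope.
Set Implicit Arguments. Unset Strict Implicit. Unset Printing Implicit Defensive.

Section WayBelow.
Variables (P : Type) (le : P -> P -> Prop).
Hypothesis le_po : is_poset le.

Lemma poset_refl x : le x x. Proof. by case: le_po. Qed.

Lemma poset_trans x y z : le x y -> le y z -> le x z.
Proof. by case: le_po => _ [+ _]; apply. Qed.

Lemma way_below_le x y : way_below le x y -> le x y.
Proof.
move=> xy.
have dir_y : directed le [set y].
  by split=> [|a b -> ->]; exists y => //; split=> //; split; apply: poset_refl.
have sup_y : is_sup le [set y] y by split=> [d ->|u]; [apply: poset_refl|apply].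
by have [d [-> //]] := xy [set y] y dir_y sup_y (poset_refl y).
Qed.

Lemma way_below_le_trans x y z : way_below le x y -> le y z -> way_below le x z.
Proof. by move=> xy yz D s dirD supD zs; apply: xy dirD supD (poset_trans yz zs). Qed.

Lemma le_way_below_trans x y z : le x y -> way_below le y z -> way_below le x z.
Proof.
move=> xy yz D s dirD supD zs; have [d [Dd yd]] := yz D s dirD supD zs.
by exists d; split=> //; apply: poset_trans xy yd.
Qed.
End WayBelow.

Section LimitUniqueness.
Variables (P : Type) (le : P -> P -> Prop) (k : comPzRingType).

Lemma colimit_ext (M : pmod P k) (S : set P) (Z W : lmodType k)
    (iota : forall x, {linear pobj M x -> Z}) (h1 h2 : {linear Z -> W}) :
  is_colimit le S iota -> (forall x v, S x -> h1 (iota x v) = h2 (iota x v)) ->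
  forall z, h1 z = h2 z.
Proof.
move=> [cocone univ] h12.
have [g [_ g_unique]] := univ W (fun x => h2 \o iota x) (fun x y v Sx Sy xy =>
  congr1 h2 (cocone x y v Sx Sy xy)).
by move=> z; rewrite (g_unique h1) ?(g_unique h2).
Qed.

Lemma limit_ext (M : pmod P k) (S : set P) (Z W : lmodType k)
    (pi : forall x, {linear Z -> pobj M x}) (h1 h2 : {linear W -> Z}) :
  is_limit le S pi -> (forall x w, S x -> pi x (h1 w) = pi x (h2 w)) ->
  forall w, h1 w = h2 w.
Proof.
move=> [cone univ] h12.
have [g [_ g_unique]] := univ W (fun x => pi x \o h2) (fun x y w Sx Sy xy =>
  cone x y (h2 w) Sx Sy xy).
by move=> w; rewrite (g_unique h1) ?(g_unique h2).
Qed.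

Lemma colimit_unique (M : pmod P k) (S : set P) (Z Z' : lmodType k)
    (iota : forall x, {linear pobj M x -> Z}) (iota' : forall x, {linear pobj M x -> Z'}) :
  is_colimit le S iota -> is_colimit le S iota' ->
  exists phi : {linear Z -> Z'},
    bijective phi /\ forall x v, S x -> phi (iota x v) = iota' x v.
Proof.
move=> colimZ colimZ'.
have [phi [phiE _]] := colimZ.2 Z' iota' colimZ'.1.
have [psi [psiE _]] := colimZ'.2 Z iota colimZ.1.
exists phi; split=> //; exists psi.
  by apply: (colimit_ext (h1 := psi \o phi) (h2 := idfun)) colimZ _ => x v Sx /=;
    rewrite phiE ?psiE.
by apply: (colimit_ext (h1 := phi \o psi) (h2 := idfun)) colimZ' _ => x v Sx /=;
  rewrite psiE ?phiE.
Qed.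

Lemma limit_unique (M : pmod P k) (S : set P) (Z Z' : lmodType k)
    (pi : forall x, {linear Z -> pobj M x}) (pi' : forall x, {linear Z' -> pobj M x}) :
  is_limit le S pi -> is_limit le S pi' ->
  exists phi : {linear Z -> Z'},
    bijective phi /\ forall x z, S x -> pi' x (phi z) = pi x z.
Proof.
move=> limZ limZ'.
have [phi [phiE _]] := limZ'.2 Z pi limZ.1.
have [psi [psiE _]] := limZ.2 Z' pi' limZ'.1.
exists phi; split=> //; exists psi.
  by apply: (limit_ext (h1 := psi \o phi) (h2 := idfun)) limZ _ => x z Sx /=;
    rewrite psiE ?phiE.
by apply: (limit_ext (h1 := phi \o psi) (h2 := idfun)) limZ' _ => x z Sx /=;
  rewrite phiE ?psiE.
Qed.
End LimitUniqueness.

Section Bars.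
Variables (P : Type) (le : P -> P -> Prop) (k : comPzRingType).
Hypothesis le_po : is_poset le.

Lemma upper_bar_unique (M B B' : pmod P k) iota iota' :
  is_upper_bar le (M := M) (N := B) iota -> is_upper_bar le (M := M) (N := B') iota' ->
  pmod_iso le B B'.
Proof.
move=> [colimB natB] [colimB' natB'].
pose phi p := projT1 (cid (colimit_unique (colimB p) (colimB' p))).
have [phi_bij phiE] : (forall p, bijective (phi p)) /\
    forall p x v, way_below le x p -> phi p (iota p x v) = iota' p x v.
  by split=> p; case: (projT2 (cid (colimit_unique (colimB p) (colimB' p)))).
exists phi; split=> // p q v pq.
apply: (colimit_ext (h1 := phi q \o Defs.pmap B p q) (h2 := Defs.pmap B' p q \o phi p))
  (colimB p) _ v => x w xp /=.
have xq := way_below_le_trans le_po xp pq.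
by rewrite natB // !phiE // natB'.
Qed.

Lemma lower_bar_unique (M B B' : pmod P k) pi pi' :
  is_lower_bar le (M := M) (N := B) pi -> is_lower_bar le (M := M) (N := B') pi' ->
  pmod_iso le B B'.
Proof.
move=> [limB natB] [limB' natB'].
pose phi p := projT1 (cid (limit_unique (limB p) (limB' p))).
have [phi_bij phiE] : (forall p, bijective (phi p)) /\
    forall p x b, way_below le p x -> pi' p x (phi p b) = pi p x b.
  by split=> p; case: (projT2 (cid (limit_unique (limB p) (limB' p)))).
exists phi; split=> // p q v pq.
apply: (limit_ext (h1 := phi q \o Defs.pmap B p q) (h2 := Defs.pmap B' p q \o phi p))
  (limB' q) _ v => x w qx /=.
have px := le_way_below_trans le_po pq qx.
by rewrite phiE // natB // natB' // phiE.
Qed.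

Lemma upper_bar_isoP (M N : pmod P k) iota :
  is_upper_bar le (M := M) (N := N) iota -> upper_bar_iso le M N.
Proof.
move=> barN; split; first by exists N, iota.
by move=> B iotaB barB; apply: upper_bar_unique barB barN.
Qed.

Lemma lower_bar_isoP (M N : pmod P k) pi :
  is_lower_bar le (M := M) (N := N) pi -> lower_bar_iso le M N.
Proof.
move=> barN; split; first by exists N, pi.
by move=> B piB barB; apply: lower_bar_unique barB barN.
Qed.
End Bars.

Section IndicatorLinks.
Variables (P : Type) (k : comPzRingType).

Definition ind_link (S T : set P) (x y : P) : {linear ind_obj k S x -> ind_obj k T y} :=
  mulmxr (const_mx 1 : 'M[k]_(ind_dim S x, ind_dim T y)).

Lemma pmap_indicator (S : set P) x y : Defs.pmap (indicator k S) x y = ind_link S S x y.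
Proof. by []. Qed.

Lemma ind_obj_eq0 (S : set P) x (v : ind_obj k S x) : ~ S x -> v = 0.
Proof.
by move=> nSx; move: v; rewrite /ind_obj /ind_dim asboolF // => v; apply/matrixP => i [].
Qed.

Lemma ind_link_id (S : set P) x v : ind_link S S x x v = v.
Proof.
have [Sx|nSx] := pselect (S x).
  move: v; rewrite /ind_link /ind_obj /ind_dim asboolT //= => v.
  by apply/matrixP => i j; rewrite !mxE big_ord1 !mxE mulr1 !ord1.
by rewrite [LHS](ind_obj_eq0 _ nSx) [RHS](ind_obj_eq0 _ nSx).
Qed.

Lemma ind_link_comp (S T U : set P) x y z : T y \/ ~ S x \/ ~ U z ->
  forall v, ind_link T U y z (ind_link S T x y v) = ind_link S U x z v.
Proof.
case=> [Ty|[nSx|nUz]] v; last 2 first.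
- by rewrite (ind_obj_eq0 v nSx) !linear0.
- by rewrite [LHS](ind_obj_eq0 _ nUz) [RHS](ind_obj_eq0 _ nUz).
rewrite /ind_link /= -mulmxA; congr (_ *m _).
have -> : ind_dim T y = 1%N by rewrite /ind_dim asboolT.
by apply/matrixP => i j; rewrite !mxE big_ord1 !mxE mulr1.
Qed.
End IndicatorLinks.

(* Keeps [/=] from unfolding the links into matrix products. *)
Opaque ind_link.

Section IndicatorColimits.
Variables (P : Type) (le : P -> P -> Prop) (k : comPzRingType).
Variables (S T X : set P) (p : P).

Lemma is_colimit_indicator :
  directed le X ->
  (T p -> (exists2 x, X x & S x) /\ forall x y, X x -> X y -> le x y -> S x -> S y) ->
  (~ T p -> forall x, X x -> exists z, [/\ X z, le x z & ~ S z]) ->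
  is_colimit le (M := indicator k S) X (fun x => ind_link k S T x p).
Proof.
move=> [[x0 Xx0] dirX] Tp_stable nTp_escape; split.
  move=> x y v Xx Xy lexy; rewrite pmap_indicator ind_link_comp //.
  have [Tp|] := pselect (T p); last by right; right.
  have [Sx|] := pselect (S x); last by right; left.
  by left; apply: (Tp_stable Tp).2 x y Xx Xy lexy Sx.
move=> W f cocone_f.
have [x1 Xx1 Sx1] : exists2 x1, X x1 & (T p -> S x1).
  have [Tp|nTp] := pselect (T p); last by exists x0 => // /nTp.
  by have [[x1 Xx1 Sx1] _] := Tp_stable Tp; exists x1.
exists (f x1 \o ind_link k T S p x1); split=> [x v Xx /=|g' g'_agrees u /=].
  have [Tp|nTp] := pselect (T p).
    have [z [Xz [lexz lex1z]]] := dirX x x1 Xx Xx1.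
    rewrite (ind_link_comp (or_introl Tp)).
    rewrite -(cocone_f x z v Xx Xz lexz) -(cocone_f x1 z _ Xx1 Xz lex1z).
    by rewrite !pmap_indicator (ind_link_comp (or_introl (Sx1 Tp))).
  have [z [Xz lexz nSz]] := nTp_escape nTp x Xx.
  rewrite (ind_obj_eq0 (ind_link k S T x p v) nTp) !linear0.
  rewrite -(cocone_f x z v Xx Xz lexz).
  by rewrite pmap_indicator (ind_obj_eq0 (ind_link k S S x z v) nSz) !linear0.
have [Tp|nTp] := pselect (T p); last by rewrite (ind_obj_eq0 u nTp) !linear0.
by rewrite -{1}(ind_link_id u) -(ind_link_comp (or_introl (Sx1 Tp))) g'_agrees.
Qed.

Lemma is_limit_indicator :
  directed (fun x y => le y x) X ->
  (T p -> (exists2 x, X x & S x) /\ forall x y, X x -> X y -> le x y -> S y -> S x) ->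
  (~ T p -> forall x, X x -> exists z, [/\ X z, le z x & ~ S z]) ->
  is_limit le (M := indicator k S) X (fun x => ind_link k T S p x).
Proof.
move=> [[x0 Xx0] codirX] Tp_stable nTp_escape; split.
  move=> x y u Xx Xy lexy; rewrite pmap_indicator ind_link_comp //.
  have [Tp|] := pselect (T p); last by right; left.
  have [Sy|] := pselect (S y); last by right; right.
  by left; apply: (Tp_stable Tp).2 x y Xx Xy lexy Sy.
move=> W f cone_f.
have [x1 Xx1 Sx1] : exists2 x1, X x1 & (T p -> S x1).
  have [Tp|nTp] := pselect (T p); last by exists x0 => // /nTp.
  by have [[x1 Xx1 Sx1] _] := Tp_stable Tp; exists x1.
exists (ind_link k S T x1 p \o f x1); split=> [x w Xx /=|g' g'_agrees w /=].
  have [Tp|nTp] := pselect (T p).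
    have [z [Xz [lezx lezx1]]] := codirX x x1 Xx Xx1.
    rewrite (ind_link_comp (or_introl Tp)).
    rewrite -(cone_f z x w Xz Xx lezx) -(cone_f z x1 w Xz Xx1 lezx1).
    by rewrite !pmap_indicator (ind_link_comp (or_introl (Sx1 Tp))).
  have [z [Xz lezx nSz]] := nTp_escape nTp x Xx.
  rewrite (ind_obj_eq0 (ind_link k S T x1 p (f x1 w)) nTp) !linear0.
  rewrite -(cone_f z x w Xz Xx lezx).
  by rewrite (ind_obj_eq0 (f z w) nSz) !linear0.
have [Tp|nTp] := pselect (T p).
  by rewrite -[LHS]ind_link_id -(ind_link_comp (or_introl (Sx1 Tp))) g'_agrees.
by rewrite [LHS](ind_obj_eq0 _ nTp) [RHS](ind_obj_eq0 _ nTp).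
Qed.
End IndicatorColimits.

Section IndicatorBars.
Variables (P : Type) (le : P -> P -> Prop) (k : comPzRingType) (S T : set P).

Lemma is_upper_bar_indicator :
  (forall p, directed le (way_below le ^~ p)) ->
  (forall p, T p -> (exists2 x, way_below le x p & S x) /\
     forall x y, way_below le x p -> way_below le y p -> le x y -> S x -> S y) ->
  (forall p, ~ T p -> forall x, way_below le x p ->
     exists z, [/\ way_below le z p, le x z & ~ S z]) ->
  (forall p q x, le p q -> way_below le x p -> S x -> T q -> T p) ->
  is_upper_bar le (M := indicator k S) (N := indicator k T)
    (fun p x => ind_link k S T x p).
Proof.
move=> dir stable escape T_down; split=> [p|p q x v pq xp].
  exact: is_colimit_indicator (dir p) (stable p) (escape p).
rewrite pmap_indicator ind_link_comp //.
have [Tq|] := pselect (T q); last by right; right.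
have [Sx|] := pselect (S x); last by right; left.
by left; apply: T_down pq xp Sx Tq.
Qed.

Lemma is_lower_bar_indicator :
  (forall p, directed (fun x y => le y x) (way_below le p)) ->
  (forall p, T p -> (exists2 x, way_below le p x & S x) /\
     forall x y, way_below le p x -> way_below le p y -> le x y -> S y -> S x) ->
  (forall p, ~ T p -> forall x, way_below le p x ->
     exists z, [/\ way_below le p z, le z x & ~ S z]) ->
  (forall p q x, le p q -> way_below le q x -> T p -> S x -> T q) ->
  is_lower_bar le (M := indicator k S) (N := indicator k T)
    (fun p x => ind_link k T S p x).
Proof.
move=> codir stable escape T_up; split=> [p|p q x v pq qx].
  exact: is_limit_indicator (codir p) (stable p) (escape p).
rewrite pmap_indicator ind_link_comp //.
have [Tp|] := pselect (T p); last by right; left.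
have [Sx|] := pselect (S x); last by right; right.
by left; apply: T_up pq qx Tp Sx.
Qed.
End IndicatorBars.

Section ScottTopology.
Variables (P : Type) (le : P -> P -> Prop) (k : comPzRingType).
Hypotheses (le_po : is_poset le) (le_cont : continuous_poset le).

Lemma way_below_interpolate x p :
  way_below le x p -> exists2 y, way_below le x y & way_below le y p.
Proof.
move=> xp.
pose E := [set y | exists2 z, way_below le y z & way_below le z p].
have dirE : directed le E.
  split.
    have [[[z zp] _] _] := le_cont p; have [[[y yz] _] _] := le_cont z.
    by exists y, z.
  move=> y1 y2 [z1 y1z1 z1p] [z2 y2z2 z2p].
  have [[_ dir_p] _] := le_cont p.
  have [z [zp [z1z z2z]]] := dir_p z1 z2 z1p z2p.
  have [[_ dir_z] _] := le_cont z.
  have [y [yz [y1y y2y]]] := dir_z y1 y2 (way_below_le_trans le_po y1z1 z1z)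
    (way_below_le_trans le_po y2z2 z2z).
  by exists y; split=> //; exists z.
have supE : is_sup le E p.
  split=> [y [z yz zp]|u Eu].
    exact: (poset_trans le_po (way_below_le le_po yz) (way_below_le le_po zp)).
  apply: (le_cont p).2.2 => z zp; apply: (le_cont z).2.2 => y yz.
  by apply: Eu; exists z.
have [d [[z dz zp] xd]] := xp E p dirE supE (poset_refl le_po p).
by exists z => //; exact: (le_way_below_trans le_po xd dz).
Qed.

Lemma scott_open_way_below x : scott_open le (way_below le x).
Proof.
split=> [y z xy yz|D s dirD supD xs].
  exact: (way_below_le_trans le_po xy yz).
have [y xy ys] := way_below_interpolate xs.
have [d [Dd yd]] := ys D s dirD supD (poset_refl le_po s).
by exists d; split=> //; exact: (way_below_le_trans le_po xy yd).
Qed.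

Lemma scott_intE (U : set P) : up_set le U ->
  scott_int le U = [set p | exists2 x, way_below le x p & U x].
Proof.
move=> upU; apply/seteqP; split=> p /=.
  move=> [V [[_ V_inacc] [VU Vp]]].
  have [dir_p sup_p] := le_cont p.
  by have [x [xp Vx]] := V_inacc _ p dir_p sup_p Vp; exists x => //; apply: VU.
move=> [x xp Ux]; exists (way_below le x); split; first exact: scott_open_way_below.
by split=> // y xy; apply: upU Ux (way_below_le le_po xy).
Qed.

Lemma scott_clE (D : set P) : down_set le D ->
  scott_cl le D = [set p | forall x, way_below le x p -> D x].
Proof.
move=> downD; rewrite /scott_cl scott_intE; last first.
  by move=> x y nDx xy Dy; apply: nDx (downD x y Dy xy).
apply/seteqP; split=> p /= Tp.
  by move=> x xp; apply: contrapT => nDx; apply: Tp; exists x.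
by move=> [x xp]; apply; apply: Tp.
Qed.

Lemma upper_bar_iso_scott_int (U : set P) : up_set le U ->
  upper_bar_iso le (indicator k U) (indicator k (scott_int le U)).
Proof.
move=> upU; rewrite scott_intE //.
apply: (upper_bar_isoP le_po); apply: is_upper_bar_indicator.
- by move=> p; case: (le_cont p).
- by move=> p [x xp Ux]; split=> [|y z _ _ yz Uy]; [exists x | exact: upU Uy yz].
- move=> p nTp x xp; exists x; split=> //; first exact: poset_refl le_po x.
  by move=> Ux; apply: nTp; exists x.
- by move=> p q x _ xp Ux _; exists x.
Qed.

Lemma upper_bar_iso_scott_cl (D : set P) : down_set le D ->
  upper_bar_iso le (indicator k D) (indicator k (scott_cl le D)).
Proof.
move=> downD; rewrite scott_clE //.
apply: (upper_bar_isoP le_po); apply: is_upper_bar_indicator.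
- by move=> p; case: (le_cont p).
- move=> p Tp; split=> [|x y _ yp _ _]; last exact: Tp.
  by have [[[x xp] _] _] := le_cont p; exists x => //; apply: Tp.
- move=> p nTp x xp.
  have [y /not_implyP[yp nDy]] := (existsNP _).2 nTp.
  have [[_ dir_p] _] := le_cont p.
  have [z [zp [xz yz]]] := dir_p x y xp yp.
  by exists z; split=> // Dz; apply: nDy (downD y z Dz yz).
- by move=> p q x pq _ _ Tq y yp; apply: Tq (way_below_le_trans le_po yp pq).
Qed.
End ScottTopology.

Section EuclideanSpace.
Variables (R : realType) (n : nat) (k : comPzRingType).
Local Notation rle := (@rn_le R n).

Lemma rn_le_poset : is_poset rle.
Proof.
split=> [x i|]; first exact: lexx.
split=> [x y z xy yz i|x y xy yx]; first exact: le_trans (xy i) (yz i).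
by apply/matrixP => i j; rewrite (ord1 i); apply/eqP; rewrite eq_le xy yx.
Qed.

Lemma rn_way_below_lt (x y : 'rV[R]_n) :
  way_below rle x y -> forall i, x ord0 i < y ord0 i.
Proof.
move=> xy i.
pose D := [set z | exists2 e : R, 0 < e & z = y - const_mx e].
have dirD : directed rle D.
  split; first by exists (y - const_mx 1), 1.
  move=> _ _ [e1 e1_gt0 ->] [e2 e2_gt0 ->].
  exists (y - const_mx (Num.min e1 e2)); split.
    by exists (Num.min e1 e2); rewrite // lt_min e1_gt0 e2_gt0.
  by split=> j; rewrite !mxE lerB // ge_min lexx ?orbT.
have supD : is_sup rle D y.
  split=> [_ [e e_gt0 ->] j|u Du j]; first by rewrite !mxE; lra.
  apply/ler_addgt0Pr => e e_gt0.
  by have := Du (y - const_mx e) (ex_intro2 _ _ e e_gt0 erefl) j; rewrite !mxE; lra.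
have [_ [[e e_gt0 ->] xd]] := xy D y dirD supD (fun j => lexx _).
by have := xd i; rewrite !mxE; lra.
Qed.

Lemma rn_lt_way_below (x y : 'rV[R]_n) :
  (forall i, x ord0 i < y ord0 i) -> way_below rle x y.
Proof.
move=> xy D s [[d0 Dd0] dirD] [s_ub s_least] ys.
have coord_ge i : exists2 d, D d & x ord0 i <= d ord0 i.
  (* Otherwise lowering the i-th coordinate of s to x_i yields a smaller upper bound. *)
  apply: contrapT => no_d.
  pose s' := \row_j (if j == i then x ord0 i else s ord0 j).
  have : rle s s'.
    apply: s_least => d Dd j; rewrite mxE; case: eqP => [->|_]; last exact: s_ub.
    by rewrite leNgt; apply/negP => dx; apply: no_d; exists d => //; apply: ltW.
  by move/(_ i); rewrite mxE eqxx => sx; have := ys i; have := xy i; lra.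
have all_ge (l : seq 'I_n) : exists2 d, D d & forall i, i \in l -> x ord0 i <= d ord0 i.
  elim: l => [|i l [d Dd dl]]; first by exists d0.
  have [d1 Dd1 d1i] := coord_ge i.
  have [z [Dz [dz d1z]]] := dirD d d1 Dd Dd1.
  exists z => // j; rewrite inE => /orP[/eqP ->|jl].
    exact: le_trans d1i (d1z i).
  exact: le_trans (dl j jl) (dz j).
have [d Dd dx] := all_ge (enum 'I_n).
by exists d; split=> // i; apply: dx; rewrite mem_enum.
Qed.

Lemma rn_way_belowP (x y : 'rV[R]_n) :
  way_below rle x y <-> forall i, x ord0 i < y ord0 i.
Proof. by split; [apply: rn_way_below_lt | apply: rn_lt_way_below]. Qed.

Lemma rn_way_below_codirected p :
  directed (fun x y => rle y x) (way_below rle p).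
Proof.
split=> [|x y /rn_way_belowP px /rn_way_belowP py].
  by exists (p + const_mx 1); apply/rn_way_belowP => i; rewrite !mxE ltrDl.
exists (\row_i Num.min (x ord0 i) (y ord0 i)); split.
  by apply/rn_way_belowP => i; rewrite mxE lt_min px py.
by split=> i; rewrite mxE ge_min lexx ?orbT.
Qed.

Lemma nbhs_exists_way_above (p : 'rV[R]_n) (B : set 'rV[R]_n) :
  nbhs p B -> exists2 x, way_below rle p x & B x.
Proof.
move/nbhs_ballP => [e e_gt0 pB]; exists (p + const_mx (e / 2)).
  by apply/rn_way_belowP => i; rewrite !mxE ltrDl divr_gt0.
apply: pB; split=> // i j; rewrite !mxE /ball /= opprD addrA subrr add0r normrN.
by rewrite gtr0_norm; rewrite /= in e_gt0; lra.
Qed.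

Lemma nbhs_le_way_above (p x : 'rV[R]_n) :
  way_below rle p x -> nbhs p [set y | rle y x].
Proof.
move=> /rn_way_belowP px.
have : nbhs p [set y : 'rV[R]_n | forall i, y ord0 i < x ord0 i].
  pose below_i i := [set y : 'rV[R]_n | y ord0 i < x ord0 i].
  apply: (@filter_forall _ _ below_i (nbhs p) _) => i.
  apply/nbhs_ballP.
  exists (x ord0 i - p ord0 i) => [|y [_ /(_ ord0 i)]]; first by rewrite /= subr_gt0.
  by rewrite /below_i /ball /= ltr_norml => /andP[]; lra.
by apply: filterS => y yx i; apply: ltW.
Qed.

Lemma closure_up_setE (U : set 'rV[R]_n) : up_set rle U ->
  closure U = [set p | forall x, way_below rle p x -> U x].
Proof.
move=> upU; apply/seteqP; split=> p /= clU.
  move=> x px; have [u [Uu ux]] := clU _ (nbhs_le_way_above px).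
  exact: upU Uu ux.
by move=> B /nbhs_exists_way_above[x px Bx]; exists x; split=> //; apply: clU.
Qed.

Lemma interior_down_setE (D : set 'rV[R]_n) : down_set rle D ->
  interior D = [set p | exists2 x, way_below rle p x & D x].
Proof.
move=> downD; apply/seteqP; split=> p; first exact: nbhs_exists_way_above.
by move=> [x px Dx]; apply: filterS (nbhs_le_way_above px) => y yx; apply: downD Dx yx.
Qed.

Lemma lower_bar_iso_closure (U : set 'rV[R]_n) : up_set rle U ->
  lower_bar_iso rle (indicator k U) (indicator k (closure U)).
Proof.
move=> upU; rewrite closure_up_setE //.
apply: (lower_bar_isoP rn_le_poset); apply: is_lower_bar_indicator.
- exact: rn_way_below_codirected.
- move=> p Tp; split=> [|x y px _ _ _]; last exact: Tp.
  by have [[x px] _] := rn_way_below_codirected p; exists x => //; apply: Tp.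
- move=> p nTp x px.
  have [y /not_implyP[py nUy]] := (existsNP _).2 nTp.
  have [z [pz [zx zy]]] := (rn_way_below_codirected p).2 x y px py.
  by exists z; split=> // Uz; apply: nUy (upU z y Uz zy).
- move=> p q x pq _ Tp _ y qy.
  exact: Tp (le_way_below_trans rn_le_poset pq qy).
Qed.

Lemma lower_bar_iso_interior (D : set 'rV[R]_n) : down_set rle D ->
  lower_bar_iso rle (indicator k D) (indicator k (interior D)).
Proof.
move=> downD; rewrite interior_down_setE //.
apply: (lower_bar_isoP rn_le_poset); apply: is_lower_bar_indicator.
- exact: rn_way_below_codirected.
- by move=> p [x px Dx]; split=> [|y z _ _ yz Dz]; [exists x | exact: downD Dz yz].
- by move=> p nTp x px; exists x; split=> // Dx; apply: nTp; exists x.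
- by move=> p q x _ qx _ Dx; exists x.
Qed.
End EuclideanSpace.

Theorem mainTheorem8 (k : comPzRingType) :
  (forall (P : Type) (le : P -> P -> Prop),
     is_poset le -> continuous_poset le ->
     (forall U : set P, up_set le U ->
        upper_bar_iso le (indicator k U) (indicator k (scott_int le U))) /\
     (forall D : set P, down_set le D ->
        upper_bar_iso le (indicator k D) (indicator k (scott_cl le D)))) /\
  (forall (R : realType) (n : nat),
     (forall U : set 'rV[R]_n, up_set (@rn_le R n) U ->
        lower_bar_iso (@rn_le R n) (indicator k U) (indicator k (closure U))) /\
     (forall D : set 'rV[R]_n, down_set (@rn_le R n) D ->
        lower_bar_iso (@rn_le R n) (indicator k D) (indicator k (interior D)))).
Proof.
split=> [P le le_po le_cont | R n]; split.
- exact: upper_bar_iso_scott_int.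
- exact: upper_bar_iso_scott_cl.
- exact: lower_bar_iso_closure.
- exact: lower_bar_iso_interior.
Qed.
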